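(* Let $G$ be an ordered group and let $S$ be a finite subset of $G$ with $|S|=k\geq 1$. If $|S^2|<2|S|$, then there exist commuting elements $x,y\in G$ such that $S=\{y,yx,yx^2,\ldots,yx^{k-1}\}$. Equivalently, if $S$ is not of this form (not a geometric progression), then $|S^2|\geq 2|S|$.
   Context: An ordered group is a group $G$ (written multiplicatively) equipped with a total order $<$ that is invariant under both left and right multiplication: $a<b$ implies $ca<cb$ and $ac<bc$ for all $a,b,c\in G$. For a subset $S\subseteq G$, $S^2=\{ab : a,b\in S\}$. A geometric progression is a set of the form $\{yx^i : 0\le i\le k-1\}$ with $x,y\in G$ commuting. *)

From Stdlib Require Import Arith List.
Import ListNotations.
Set Implicit Arguments.

Record ordered_group := OrderedGroup {
  carrier :> Type;
  mul : carrier -> carrier -> carrier;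
  one : carrier;
  inv : carrier -> carrier;
  lt : carrier -> carrier -> Prop;
  mulA : forall a b c, mul a (mul b c) = mul (mul a b) c;
  mul1g : forall a, mul one a = a;
  mulVg : forall a, mul (inv a) a = one;
  lt_irrefl : forall a, ~ lt a a;
  lt_trans : forall a b c, lt a b -> lt b c -> lt a c;
  lt_total : forall a b, lt a b \/ a = b \/ lt b a;
  lt_mull : forall a b c, lt a b -> lt (mul c a) (mul c b);
  lt_mulr : forall a b c, lt a b -> lt (mul a c) (mul b c)
}.

Fixpoint gpow (G : ordered_group) (x : G) (n : nat) : G :=
  match n with
  | O => one G
  | S m => mul G x (@gpow G x m)
  end.

Definition has_card (G : ordered_group) (P : G -> Prop) (n : nat) : Prop :=
  exists l : list G, NoDup l /\ (forall z, In z l <-> P z) /\ length l = n.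

Definition sq_set (G : ordered_group) (S : G -> Prop) : G -> Prop :=
  fun z => exists a b, S a /\ S b /\ z = mul G a b.
Arguments gpow {G} x n.
Arguments has_card {G} P n.
Arguments sq_set {G} S _.

(* Enumerate S increasingly as s_0 < ... < s_(k-1).  The 2k-1 products
   s_0 s_0 < s_0 s_1 < s_1 s_1 < s_1 s_2 < ... < s_(k-1) s_(k-1) are distinct
   elements of S^2, so when |S^2| < 2k they are all of S^2.  Then s_(i+1) s_i,
   squeezed strictly between s_i s_i and s_(i+1) s_(i+1), must be s_i s_(i+1);
   and s_i s_(i+2), squeezed between s_i s_(i+1) and s_(i+1) s_(i+2), must be
   s_(i+1)^2.  These two relations force s_(i+1) = s_i x with x = s_0^-1 s_1,
   and x commutes with s_0. *)

From Stdlib Require Import Arith List Lia.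

Set Implicit Arguments.

Section OrderedGroup.

Variable G : ordered_group.

Local Notation "a · b" := (mul G a b) (at level 40, left associativity).
Local Notation "a ≺ b" := (lt G a b) (at level 70).

Lemma lt_asym (a b : G) : a ≺ b -> ~ b ≺ a.
Proof. intros Hab Hba; exact (lt_irrefl _ _ (lt_trans _ _ _ _ Hab Hba)). Qed.

Lemma mulgV (a : G) : a · inv G a = one G.
Proof.
  transitivity (inv G (inv G a) · inv G a · (a · inv G a)).
  - rewrite mulVg, mul1g; reflexivity.
  - rewrite <- mulA, (mulA G (inv G a) a), mulVg, mul1g; apply mulVg.
Qed.

Lemma mulg1 (a : G) : a · one G = a.
Proof. rewrite <- (mulVg G a), mulA, mulgV, mul1g; reflexivity. Qed.

Lemma mulg_cancel_l (c a b : G) : c · a = c · b -> a = b.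
Proof.
  intros E; destruct (lt_total G a b) as [H|[H|H]]; [|exact H|];
    apply (lt_mull G _ _ c) in H; rewrite E in H; destruct (lt_irrefl _ _ H).
Qed.

Lemma gpowSr (x : G) (n : nat) : gpow x (S n) = gpow x n · x.
Proof.
  induction n as [|n IH]; simpl.
  - rewrite mulg1, mul1g; reflexivity.
  - simpl in IH; rewrite IH at 1; apply mulA.
Qed.

Definition increasing_on (c : nat -> G) (n : nat) : Prop :=
  forall i j, i < j < n -> c i ≺ c j.

Definition enumerates (c : nat -> G) (n : nat) (P : G -> Prop) : Prop :=
  forall z, P z <-> exists i, i < n /\ z = c i.

Lemma increasing_on_succ (c : nat -> G) (n : nat) :
  (forall j, S j < n -> c j ≺ c (S j)) -> increasing_on c n.
Proof.
  intros Hstep i j; induction j as [|j IH]; intros Hij; [lia|].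
  destruct (Nat.eq_dec i j) as [->|Hne]; [apply Hstep; lia|].
  apply lt_trans with (c j); [apply IH|apply Hstep]; lia.
Qed.

Lemma increasing_on_lt (c : nat -> G) (n i j : nat) :
  increasing_on c n -> i < n -> j < n -> c i ≺ c j -> i < j.
Proof.
  intros Hc Hi Hj Hcij.
  destruct (Nat.lt_total i j) as [H|[->|H]]; [exact H| |];
    exfalso; [exact (lt_irrefl _ _ Hcij)|].
  exact (lt_asym _ _ Hcij (Hc j i ltac:(lia))).
Qed.

Lemma increasing_on_NoDup (c : nat -> G) (n : nat) :
  increasing_on c n -> NoDup (map c (seq 0 n)).
Proof.
  intros Hc; apply NoDup_nth with (d := c 0); rewrite length_map, length_seq.
  intros i j Hi Hj E; rewrite !(map_nth c), !seq_nth in E by lia; simpl in E.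
  destruct (Nat.lt_total i j) as [H|[H|H]]; [exfalso| exact H |exfalso].
  - apply (lt_irrefl _ (c i)); rewrite E at 2; apply Hc; lia.
  - apply (lt_irrefl _ (c j)); rewrite <- E at 2; apply Hc; lia.
Qed.

Lemma increasing_on_insert (c : nat -> G) (a : G) (n : nat) :
  increasing_on c n -> (forall i, i < n -> c i <> a) ->
  exists p, p <= n /\ (forall i, i < p -> c i ≺ a) /\
            (forall i, p <= i < n -> a ≺ c i).
Proof.
  induction n as [|n IH]; intros Hc Ha.
  - exists 0; repeat split; intros; lia.
  - destruct IH as [p [Hp [Hbelow Habove]]].
    + intros i j Hij; apply Hc; lia.
    + intros i Hi; apply Ha; lia.
    + destruct (lt_total _ (c n) a) as [Hl|[He|Hl]].
      * exists (S n); repeat split; [lia| |intros; lia].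
        intros i Hi; destruct (Nat.eq_dec i n) as [->|Hne]; [exact Hl|].
        apply lt_trans with (c n); [apply Hc; lia|exact Hl].
      * destruct (Ha n ltac:(lia) He).
      * exists p; repeat split; [lia|exact Hbelow|].
        intros i Hi; destruct (Nat.eq_dec i n) as [->|Hne]; [exact Hl|].
        apply Habove; lia.
Qed.

Lemma sorted_enumeration (l : list G) : NoDup l ->
  exists c, increasing_on c (length l) /\
            enumerates c (length l) (fun z => In z l).
Proof.
  induction l as [|a l IH]; intros Hnd.
  - exists (fun _ => one G); split; [intros i j; simpl; lia|].
    intros z; simpl; split; [tauto|intros [i [Hi _]]; lia].
  - apply NoDup_cons_iff in Hnd as [Hal Hnd].
    destruct (IH Hnd) as [c [Hc Hen]].
    destruct (increasing_on_insert (a := a) Hc) as [p [Hp [Hbelow Habove]]].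
    { intros i Hi E; apply Hal, Hen; exists i; auto. }
    exists (fun i => if i <? p then c i else if i =? p then a else c (i - 1)).
    simpl; split.
    + intros i j Hij.
      destruct (Nat.ltb_spec i p), (Nat.eqb_spec i p),
        (Nat.ltb_spec j p), (Nat.eqb_spec j p); try lia;
        first [apply Hc | apply Hbelow | apply Habove]; lia.
    + intros z; split.
      * intros [<-|Hz].
        { exists p; rewrite Nat.ltb_irrefl, Nat.eqb_refl; split; [lia|reflexivity]. }
        apply Hen in Hz as [i [Hi ->]].
        destruct (Nat.ltb_spec i p).
        -- exists i; destruct (Nat.ltb_spec i p); [split; auto; lia|lia].
        -- exists (S i); destruct (Nat.ltb_spec (S i) p), (Nat.eqb_spec (S i) p);
             try lia; split; [lia|f_equal; lia].
      * intros [i [Hi ->]].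
        destruct (Nat.ltb_spec i p); [right; apply Hen; exists i; split; [lia|auto]|].
        destruct (Nat.eqb_spec i p); [left; reflexivity|].
        right; apply Hen; exists (i - 1); split; [lia|reflexivity].
Qed.

Lemma has_card_sorted (P : G -> Prop) (n : nat) : has_card P n ->
  exists c, increasing_on c n /\ enumerates c n P.
Proof.
  intros [l [Hnd [Hl <-]]]; destruct (sorted_enumeration Hnd) as [c [Hc Hen]].
  exists c; split; [exact Hc|]; intros z; rewrite <- Hl; apply Hen.
Qed.

Lemma enumerates_of_card_le (P : G -> Prop) (c : nat -> G) (m n : nat) :
  has_card P m -> m <= n -> increasing_on c n ->
  (forall j, j < n -> P (c j)) -> enumerates c n P.
Proof.
  intros [L [HndL [HL HlenL]]] Hmn Hc HcP z; split.
  - intros Hz.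
    assert (Hincl : incl L (map c (seq 0 n))).
    { apply NoDup_length_incl.
      - apply increasing_on_NoDup, Hc.
      - rewrite length_map, length_seq; lia.
      - intros w Hw; apply in_map_iff in Hw as [j [<- Hj]]; apply in_seq in Hj.
        apply HL, HcP; lia. }
    apply HL, Hincl, in_map_iff in Hz as [j [<- Hj]]; apply in_seq in Hj.
    exists j; split; [lia|reflexivity].
  - intros [j [Hj ->]]; apply HcP, Hj.
Qed.

Lemma enumerates_squeeze (P : G -> Prop) (c : nat -> G) (n j : nat) (z : G) :
  increasing_on c n -> enumerates c n P -> S (S j) < n ->
  P z -> c j ≺ z -> z ≺ c (S (S j)) -> z = c (S j).
Proof.
  intros Hc Hen Hj Hz Hlo Hhi; apply Hen in Hz as [t [Ht ->]].
  apply (increasing_on_lt Hc) in Hlo; [|lia|lia].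
  apply (increasing_on_lt Hc) in Hhi; [|lia|lia].
  f_equal; lia.
Qed.

Section SmallSquare.

Variables (A : G -> Prop) (k : nat) (s : nat -> G).
Hypothesis s_incr : increasing_on s k.
Hypothesis s_enum : enumerates s k A.
Hypothesis small_square : exists m, has_card (sq_set A) m /\ m < 2 * k.

Lemma s_in (i : nat) : i < k -> A (s i).
Proof. intros Hi; apply s_enum; exists i; auto. Qed.

Lemma sq_set_mul (i j : nat) : i < k -> j < k -> sq_set A (s i · s j).
Proof. intros Hi Hj; exists (s i), (s j); repeat split; apply s_in; assumption. Qed.

(* s_0 s_0, s_0 s_1, s_1 s_1, s_1 s_2, ... *)
Definition interleave (j : nat) : G := s (Nat.div2 j) · s (Nat.div2 (S j)).

Lemma interleave_double (i : nat) : interleave (2 * i) = s i · s i.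
Proof. unfold interleave; rewrite Nat.div2_double, Nat.div2_succ_double; reflexivity. Qed.

Lemma interleave_double_succ (i : nat) : interleave (S (2 * i)) = s i · s (S i).
Proof.
  unfold interleave; rewrite Nat.div2_succ_double.
  replace (S (S (2 * i))) with (2 * S i) by lia; rewrite Nat.div2_double; reflexivity.
Qed.

Lemma interleave_incr : increasing_on interleave (2 * k - 1).
Proof.
  apply increasing_on_succ; intros j Hj.
  destruct (Nat.Even_or_Odd j) as [[i ->]|[i ->]].
  - rewrite interleave_double, interleave_double_succ; apply lt_mull, s_incr; lia.
  - replace (2 * i + 1) with (S (2 * i)) by lia.
    replace (S (S (2 * i))) with (2 * S i) by lia.
    rewrite interleave_double_succ, interleave_double; apply lt_mulr, s_incr; lia.
Qed.

Lemma enumerates_sq_set : enumerates interleave (2 * k - 1) (sq_set A).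
Proof.
  destruct small_square as [m [Hm Hmk]].
  apply (enumerates_of_card_le Hm); [lia|apply interleave_incr|].
  intros j Hj; destruct (Nat.Even_or_Odd j) as [[i ->]|[i ->]].
  - rewrite interleave_double; apply sq_set_mul; lia.
  - replace (2 * i + 1) with (S (2 * i)) by lia.
    rewrite interleave_double_succ; apply sq_set_mul; lia.
Qed.

Lemma consecutive_commute (i : nat) : S i < k -> s (S i) · s i = s i · s (S i).
Proof.
  intros Hi; rewrite <- interleave_double_succ.
  apply (enumerates_squeeze _ interleave_incr enumerates_sq_set); [lia|apply sq_set_mul; lia| |].
  - rewrite interleave_double; apply lt_mulr, s_incr; lia.
  - replace (S (S (2 * i))) with (2 * S i) by lia.
    rewrite interleave_double; apply lt_mull, s_incr; lia.
Qed.

Lemma skip_product_square (i : nat) : S (S i) < k -> s i · s (S (S i)) = s (S i) · s (S i).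
Proof.
  intros Hi; rewrite <- interleave_double.
  replace (2 * S i) with (S (S (2 * i))) by lia.
  apply (enumerates_squeeze _ interleave_incr enumerates_sq_set); [lia|apply sq_set_mul; lia| |].
  - rewrite interleave_double_succ; apply lt_mull, s_incr; lia.
  - replace (S (S (S (2 * i)))) with (S (2 * S i)) by lia.
    rewrite interleave_double_succ; apply lt_mulr, s_incr; lia.
Qed.

End SmallSquare.

Section Progression.

Variables (k : nat) (s : nat -> G).
Hypothesis commute_succ : forall i, S i < k -> s (S i) · s i = s i · s (S i).
Hypothesis skip_square : forall i, S (S i) < k -> s i · s (S (S i)) = s (S i) · s (S i).

Let x := inv G (s 0) · s 1.

Lemma progression_succ (i : nat) : S i < k -> s (S i) = s i · x.
Proof.
  induction i as [|i IH]; intros Hi.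
  - unfold x; rewrite mulA, mulgV, mul1g; reflexivity.
  - apply (@mulg_cancel_l (s i)).
    rewrite skip_square, mulA, <- commute_succ, <- mulA, <- IH by lia.
    reflexivity.
Qed.

Lemma progression_pow (i : nat) : i < k -> s i = s 0 · gpow x i.
Proof.
  induction i as [|i IH]; intros Hi.
  - simpl; rewrite mulg1; reflexivity.
  - rewrite progression_succ, IH, gpowSr, mulA by lia; reflexivity.
Qed.

Lemma progression_ratio_commute : 1 < k -> x · s 0 = s 0 · x.
Proof.
  intros Hk; unfold x.
  rewrite <- mulA, commute_succ, !mulA, mulgV, mulVg, !mul1g by lia; reflexivity.
Qed.

End Progression.

End OrderedGroup.

Arguments increasing_on {G} c n.
Arguments enumerates {G} c n P.

Theorem lemma2 (G : ordered_group) (S : G -> Prop) (k : nat) :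
  1 <= k -> has_card S k ->
  (exists m, has_card (sq_set S) m /\ m < 2 * k) ->
  exists x y : G, mul G x y = mul G y x /\
    (forall z, S z <-> exists i, i < k /\ z = mul G y (gpow x i)).
Proof.
  intros Hk HS Hsq.
  destruct (has_card_sorted HS) as [s [Hincr Henum]].
  destruct (Nat.eq_dec k 1) as [->|Hk2].
  - exists (one G), (s 0); split; [rewrite mul1g, mulg1; reflexivity|].
    intros z; rewrite (Henum z); split; intros [i [Hi ->]]; exists i; split; auto;
      replace i with 0 by lia; simpl; rewrite mulg1; reflexivity.
  - pose proof (consecutive_commute Hincr Henum Hsq) as Hcomm.
    pose proof (skip_product_square Hincr Henum Hsq) as Hskip.
    exists (mul G (inv G (s 0)) (s 1)), (s 0); split.
    + exact (progression_ratio_commute _ _ Hcomm ltac:(lia)).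
    + intros z; rewrite (Henum z); split; intros [i [Hi ->]]; exists i; split; auto;
        [|symmetry]; exact (progression_pow _ _ Hcomm Hskip Hi).
Qed.
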